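(* Let $A\in\mathsf{M}_n(\mathbb{C})$ be nonsingular and $h$-cyclic, and let $P=\{V_1,\dots,V_h\}$ be a partition of $\{1,\dots,n\}$ describing the $h$-cyclic structure of $A$. Then $|V_i|=|V_j|$ for all $i,j\in\{1,\dots,h\}$.
   Context: The digraph $\Gamma_A$ of $A=[a_{ij}]\in\mathsf{M}_n(\mathbb{C})$ has vertex set $\{1,\dots,n\}$ and arc set $\{(i,j): a_{ij}\neq 0\}$. A digraph with vertex set $V$ and arc set $E$ is cyclically $h$-partite with partition $P=\{V_1,\dots,V_h\}$ of $V$ (into $h$ nonempty parts) if for every arc $(i,j)\in E$ there is $\ell\in\{1,\dots,h\}$ with $i\in V_\ell$ and $j\in V_{\ell+1}$, where $V_{h+1}:=V_1$. The matrix $A$ is $h$-cyclic with partition $P$ (equivalently, $P$ describes the $h$-cyclic structure of $A$) if $\Gamma_A$ is cyclically $h$-partite with partition $P$; i.e., $a_{ij}\neq 0$ implies $i\in V_\ell$, $j\in V_{\ell+1}$ for some $\ell$. *)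

From mathcomp Require Import all_boot all_order all_algebra.
From mathcomp Require Import reals.
From mathcomp Require Import complex.
Set Implicit Arguments. Unset Strict Implicit. Unset Printing Implicit Defensive.
Import GRing.Theory Num.Theory.
Local Open Scope ring_scope.

(* An ordered partition P = (V_1,...,V_h) of {1..n} (here {0..n-1}) into h
   nonempty parts, indexed by 'I_h (V_0,...,V_{h-1}). *)
Definition is_ordered_partition (n h : nat) (V : 'I_h -> {set 'I_n}) : Prop :=
  (forall k, V k != set0) /\
  (forall k l, k != l -> [disjoint V k & V l]) /\
  (forall i : 'I_n, exists k, i \in V k).

Definition cyclic_with_partition (F : nzRingType) (n h : nat) (A : 'M[F]_n)
    (V : 'I_h -> {set 'I_n}) : Prop :=
  is_ordered_partition V /\
  forall i j : 'I_n, A i j != 0 ->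
    exists l : 'I_h, exists l' : 'I_h,
      (nat_of_ord l' = (l.+1 %% h)%N) /\ i \in V l /\ j \in V l'.

From mathcomp Require Import all_boot all_order all_algebra.
From mathcomp Require Import reals complex.
Set Implicit Arguments. Unset Strict Implicit. Unset Printing Implicit Defensive.
Import GRing.Theory Num.Theory.
Local Open Scope ring_scope.

(* The rows of A indexed by V_l are linearly independent, since A is
   invertible, and they vanish outside the columns of V_(l+1); hence
   |V_l| <= |V_(l+1)|.  Around the cycle these inequalities add up to an
   equality of equal sums, so each of them is an equality. *)

Lemma mxsub_inj_scalar (R : pzRingType) m n (f : 'I_m -> 'I_n) (a : R) :
  injective f -> mxsub f f a%:M = a%:M.
Proof. by move=> f_inj; apply/matrixP=> i j; rewrite !mxE (inj_eq f_inj). Qed.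

Section RankBounds.
Variable F : fieldType.

Lemma row_free_rowsub m m' n (f : 'I_m' -> 'I_m) (A : 'M[F]_(m, n)) :
  injective f -> row_free A -> row_free (rowsub f A).
Proof.
move=> f_inj /row_freeP[B AB1]; apply/row_freeP; exists (B *m colsub f 1%:M).
by rewrite mulmxA mul_rowsub_mx AB1 -mxsub_mul mul1mx mxsub_inj_scalar.
Qed.

Lemma mxrank_le_support m n (B : 'M[F]_(m, n)) (T : {set 'I_n}) :
  (forall i j, B i j != 0 -> j \in T) -> (\rank B <= #|T|)%N.
Proof.
move=> suppB; rewrite -mxrank_tr.
have subT : (B^T <= rowsub (@enum_val _ (mem T)) B^T)%MS.
  apply/row_subP=> j; have [jT | jNT] := boolP (j \in T).
    by rewrite -(enum_rankK_in jT jT) -row_rowsub row_sub.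
  suff -> : row j B^T = 0 by rewrite sub0mx.
  apply/rowP=> i; rewrite !mxE; apply: contraNeq jNT; exact: suppB.
exact: leq_trans (mxrankS subT) (rank_leq_row _).
Qed.

Lemma card_le_support m n (A : 'M[F]_(m, n)) (S : {set 'I_m}) (T : {set 'I_n}) :
  row_free A -> (forall i j, i \in S -> A i j != 0 -> j \in T) ->
  (#|S| <= #|T|)%N.
Proof.
move=> freeA suppA.
have /eqP <- := row_free_rowsub (@enum_val_inj _ (mem S)) freeA.
by apply: mxrank_le_support => i j; rewrite mxE; apply/suppA/enum_valP.
Qed.

End RankBounds.

Lemma inj_leq_comp_eq (T : finType) (s : T -> T) (f : T -> nat) :
  injective s -> (forall x, (f x <= f (s x))%N) -> forall x, f (s x) = f x.
Proof.
move=> s_inj le_fs x.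
have sum_fs : (\sum_y f (s y) = \sum_y f y)%N by rewrite [RHS](reindex_inj s_inj).
have /leqif_sum[_] := fun y (_ : true) => leqif_eq (le_fs y).
by rewrite sum_fs eqxx => /esym/forall_inP/(_ x isT)/eqP.
Qed.

Lemma ordS_invariant_const T h (f : 'I_h -> T) :
  (forall k, f (ordS k) = f k) -> forall k l, f k = f l.
Proof.
case: h f => [f _ []//|h f fS].
suff f0 m : (m <= h)%N -> f (inord m) = f ord0.
  by move=> k l; rewrite -(inord_val k) -(inord_val l) !f0 // -ltnS.
elim: m => [|m IHm] lt_mh; first by congr f; apply: val_inj; rewrite /= inordK.
rewrite -IHm ?(ltnW lt_mh) // -(fS (inord m)); congr f; apply: val_inj.
by rewrite /= !inordK ?modn_small // ltnS ltnW.
Qed.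

Lemma cyclic_support_ordS (F : nzRingType) n h (A : 'M[F]_n)
    (V : 'I_h -> {set 'I_n}) :
  cyclic_with_partition A V ->
  forall l i j, i \in V l -> A i j != 0 -> j \in V (ordS l).
Proof.
move=> [[_ [disjV _]] cycA] l i j iVl /cycA[l1 [l2 [l2E [iVl1 jVl2]]]].
have <- : l1 = l.
  by apply: contraTeq iVl => /disjV disj_l1l; rewrite (disjointFr disj_l1l iVl1).
by rewrite (_ : ordS l1 = l2) //; apply: val_inj.
Qed.

Theorem theorem3p1 (R : realType) (n h : nat) (A : 'M[R[i]]_n)
    (V : 'I_h -> {set 'I_n}) :
  (0 < h)%N ->
  A \in unitmx ->
  cyclic_with_partition A V ->
  forall k l : 'I_h, #|V k| = #|V l|.
Proof.
move=> _ unitA cycA.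
apply: (@ordS_invariant_const _ _ (fun k => #|V k|)).
apply: inj_leq_comp_eq => [|l]; first exact: ordS_inj.
apply: card_le_support _ (cyclic_support_ordS cycA (l := l)).
by rewrite row_free_unit.
Qed.
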